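(* Let $\epsilon>0$, $0<\delta<1$, positive integers $m\le n$, and $\sigma_1^2,\dots,\sigma_n^2>0$. Consider the weighted naive elimination algorithm: with $\omega_i=\delta\,\sigma_i^2/\sum_{j=1}^n\sigma_j^2$, it pulls each arm $i\in[n]$ exactly $\frac{2\sigma_i^2}{(\epsilon/2)^2}\ln\frac1{\omega_i}$ times, computes the sample mean $\hat\mu_i$ of each arm, and returns the $m$ arms with the largest sample means. This algorithm uses \[ 8\sum_{i\in[n]}\frac{\sigma_i^2}{\epsilon^2}\Big(\ln\frac1\delta+\mathrm{Ent}(\sigma^2_{1:n})\Big) \] samples, and it solves the $(\epsilon,\delta)$ top-$m$ arm identification problem.
   Context: Bandit setting: $n$ arms; pulling arm $i$ returns an independent sample from a distribution with unknown mean $\mu_i$ that is $\sigma_i^2$-sub-Gaussian ($\ln\mathbb E[e^{\lambda(X-\mu_i)}]\le\sigma_i^2\lambda^2/2$ for all real $\lambda$), $\sigma_i^2$ known. $\max^m_{i\in S}\mu_i$ denotes the $m$-th largest mean in $S$. An arm is $\epsilon$-approximate top-$m$ if its mean is at least $\max^m_{i\in[n]}\mu_i-\epsilon$. An algorithm solves the $(\epsilon,\delta)$ top-$m$ arm identification problem if for every such instance, with probability at least $1-\delta$, all $m$ returned arms are $\epsilon$-approximate top-$m$. $\mathrm{Ent}(a)=-\sum_i\hat a_i\ln\hat a_i$ with $\hat a_i=a_i/\sum_ja_j$ for a positive vector $a$. *)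

From HB Require Import structures.
From mathcomp Require Import all_boot all_order all_algebra.
From mathcomp Require Import all_classical all_reals all_analysis.
Set Implicit Arguments. Unset Strict Implicit. Unset Printing Implicit Defensive.
Import Order.TTheory GRing.Theory Num.Theory.
Local Open Scope classical_set_scope.
Local Open Scope ring_scope.

Definition Ent (R : realType) (n : nat) (a : 'I_n -> R) : R :=
  - \sum_(i < n) (a i / \sum_(j < n) a j) * ln (a i / \sum_(j < n) a j).

Definition mth_largest (R : realType) (n : nat) (m : nat) (mu : 'I_n -> R) : R :=
  nth 0 (sort (fun x y : R => y <= x) [seq mu i | i <- enum 'I_n]) m.-1.

Definition omega (R : realType) (n : nat) (delta : R) (sigma2 : 'I_n -> R)
  (i : 'I_n) : R := delta * sigma2 i / \sum_(j < n) sigma2 j.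

Definition num_pulls (R : realType) (n : nat) (eps delta : R)
  (sigma2 : 'I_n -> R) (i : 'I_n) : R :=
  2 * sigma2 i / (eps / 2) ^+ 2 * ln (1 / omega delta sigma2 i).

Definition pulls (R : realType) (n : nat) (eps delta : R)
  (sigma2 : 'I_n -> R) (i : 'I_n) : nat :=
  `|Num.ceil (num_pulls eps delta sigma2 i)|%N.

Definition sample_mean (T : Type) (R : realType) (n : nat) (eps delta : R)
  (sigma2 : 'I_n -> R) (X : 'I_n -> nat -> T -> R) (i : 'I_n) (w : T) : R :=
  (\sum_(k < pulls eps delta sigma2 i) X i k w) / (pulls eps delta sigma2 i)%:R.

(* arm distribution D with mean mu that is sigma2-sub-Gaussian:
   E[e^{lambda (X - mu)}] <= e^{sigma2 lambda^2 / 2} for all real lambda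
   (equivalently ln E[e^{lambda(X-mu)}] <= sigma2 lambda^2/2) *)
Definition arm_ok (R : realType) (D : probability R R) (mu sigma2 : R) : Prop :=
  (\int[D]_x (x%:E) = mu%:E)%E /\
  forall lambda : R,
    (\int[D]_x (expR (lambda * (x - mu)))%:E <= (expR (sigma2 * lambda ^+ 2 / 2))%:E)%E.

Definition mutually_independent d (T : measurableType d) (R : realType)
  (P : probability T R) (I : eqType) (Y : I -> T -> R) : Prop :=
  forall (J : seq I) (B : I -> set R), uniq J ->
    (forall j, j \in J -> measurable (B j)) ->
    fine (P (\bigcap_(j in [set` J]) (Y j @^-1` B j))) =
    \prod_(j <- J) fine (P (Y j @^-1` B j)).

(* Sample complexity: with S = sum_j sigma_j^2 we have
   ln (1 / omega_i) = ln (1 / delta) - ln (sigma_i^2 / S), and the sum over i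
   of sigma_i^2 ln (sigma_i^2 / S) is - S Ent.

   Correctness: for arm i with K_i >= num_pulls_i samples, a Chernoff bound for
   the sum of K_i independent sigma_i^2-sub-Gaussian variables, taken with
   lambda = +-eps / (2 sigma_i^2), shows that the sample mean is off by eps/2
   with probability at most exp (- K_i eps^2 / (8 sigma_i^2)) <= omega_i; the
   deviation is taken downwards for arms at least as good as the m-th best and
   upwards for the others.  The omega_i sum to delta, and outside these bad
   events a returned arm i with mu_i < mu^(m) - eps would have a smaller sample
   mean than some unreturned arm j with mu_j >= mu^(m), which exists because at
   least m arms reach mu^(m).

   Independence is only given as a product rule for events; it is turned into
   the product rule E[prod_j f_j(Y_j)] = prod_j E[f_j(Y_j)] for nonnegative f_j
   by induction on the number of factors, approximating each f_j by simple
   functions. *)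

From HB Require Import structures.
From mathcomp Require Import all_boot all_order all_algebra.
From mathcomp Require Import all_classical all_reals all_analysis.
From mathcomp Require Import lra ring zify measurable_realfun.

Set Implicit Arguments.
Unset Strict Implicit.
Unset Printing Implicit Defensive.

Import Order.TTheory GRing.Theory Num.Theory.
Local Open Scope classical_set_scope.
Local Open Scope ring_scope.

Section sample_complexity.
Variables (R : realType) (n : nat) (sigma2 : 'I_n -> R).
Hypothesis sigma2_gt0 : forall i, 0 < sigma2 i.

Lemma sum_mul_ln_inv_omega (delta : R) : 0 < delta ->
  \sum_(i < n) sigma2 i * ln (1 / omega delta sigma2 i) =
    (\sum_(i < n) sigma2 i) * (ln (1 / delta) + Ent sigma2).
Proof.
move=> delta_gt0; set S := \sum_(j < n) sigma2 j.
have [S0|S_neq0] := eqVneq S 0.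
  rewrite S0 mul0r; apply: big1 => i _.
  by rewrite /omega -/S S0 invr0 mulr0 div1r invr0 ln0 // mulr0.
have S_gt0 : 0 < S by rewrite lt0r S_neq0 sumr_ge0 // => i _; exact: ltW.
have ln_inv_omega i :
    ln (1 / omega delta sigma2 i) = ln (1 / delta) - ln (sigma2 i / S).
  rewrite /omega -/S -mulrA !div1r !lnV ?posrE ?mulr_gt0 ?divr_gt0 ?invr_gt0 //.
  by rewrite lnM ?posrE ?divr_gt0 // opprD.
under eq_bigr do rewrite ln_inv_omega mulrBr.
rewrite sumrB -mulr_suml /Ent -/S mulrDr mulrN mulr_sumr; congr (_ - _).
by apply: eq_bigr => i _; rewrite mulrA mulrCA mulfV // mulr1.
Qed.

Lemma sum_num_pulls (eps delta : R) : 0 < eps -> 0 < delta ->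
  \sum_(i < n) num_pulls eps delta sigma2 i =
    8 * (\sum_(i < n) sigma2 i / eps ^+ 2) * (ln (1 / delta) + Ent sigma2).
Proof.
move=> eps_gt0 delta_gt0.
have num_pullsE i : num_pulls eps delta sigma2 i =
    8 / eps ^+ 2 * (sigma2 i * ln (1 / omega delta sigma2 i)).
  by rewrite /num_pulls; field; rewrite gt_eqF.
under eq_bigr do rewrite num_pullsE.
by rewrite -mulr_sumr sum_mul_ln_inv_omega // -mulr_suml; field; rewrite gt_eqF.
Qed.

End sample_complexity.

Lemma mean_deviation_lt (R : realFieldType) (K : nat) (x : nat -> R)
    (c s e : R) :
  (0 < K)%N -> s * \sum_(k < K) (x k - c) < K%:R * e ->
  s * ((\sum_(k < K) x k) / K%:R - c) < e.
Proof.
move=> K_gt0; have K_pos : 0 < K%:R :> R by rewrite ltr0n.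
rewrite (_ : s * (_ - c) = s * (\sum_(k < K) (x k - c)) / K%:R).
  by rewrite ltr_pdivrMr // [e * _]mulrC.
by rewrite sumrB sumr_const card_ord -[c *+ K]mulr_natl; field; rewrite gt_eqF.
Qed.

Section weights.
Variables (R : realType) (n : nat) (eps delta : R) (sigma2 : 'I_n -> R).
Hypotheses (eps_gt0 : 0 < eps) (delta_gt0 : 0 < delta) (delta_lt1 : delta < 1).
Hypothesis sigma2_gt0 : forall i, 0 < sigma2 i.

Let sigma2_le_sum i : sigma2 i <= \sum_(j < n) sigma2 j.
Proof. by rewrite (bigD1 i) //= lerDl sumr_ge0 // => j _; exact: ltW. Qed.

Lemma omega_gt0 i : 0 < omega delta sigma2 i.
Proof.
by rewrite /omega divr_gt0 ?mulr_gt0 // (lt_le_trans (sigma2_gt0 i)).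
Qed.

Lemma omega_lt1 i : omega delta sigma2 i < 1.
Proof.
have S_gt0 := lt_le_trans (sigma2_gt0 i) (sigma2_le_sum i).
rewrite /omega ltr_pdivrMr // mul1r.
by apply: lt_le_trans (sigma2_le_sum i); rewrite gtr_pMl.
Qed.

Lemma sum_omega : (0 < n)%N -> \sum_(i < n) omega delta sigma2 i = delta.
Proof.
move=> n_gt0.
have S_gt0 := lt_le_trans (sigma2_gt0 (Ordinal n_gt0)) (sigma2_le_sum _).
by rewrite /omega -mulr_suml -mulr_sumr mulfK // gt_eqF.
Qed.

Lemma num_pulls_le_pulls i :
  num_pulls eps delta sigma2 i <= (pulls eps delta sigma2 i)%:R.
Proof.
by rewrite /pulls natr_absz (le_trans (ceil_ge _)) // ler_int ler_norm.
Qed.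

Lemma num_pulls_gt0 i : 0 < num_pulls eps delta sigma2 i.
Proof.
rewrite /num_pulls !mulr_gt0 ?invr_gt0 ?exprn_gt0 ?divr_gt0 //.
by rewrite ln_gt0 // div1r invf_gt1 ?omega_gt0 ?omega_lt1.
Qed.

Lemma pulls_gt0 i : (0 < pulls eps delta sigma2 i)%N.
Proof.
by rewrite -(ltr0n R) (lt_le_trans (num_pulls_gt0 i)) ?num_pulls_le_pulls.
Qed.

Lemma expR_pulls_le_omega i :
  expR (- ((pulls eps delta sigma2 i)%:R * eps ^+ 2 / (8 * sigma2 i))) <=
    omega delta sigma2 i.
Proof.
have := num_pulls_le_pulls i.
rewrite /num_pulls div1r lnV ?posrE ?omega_gt0 //.
set L := - ln _.
rewrite (_ : 2 * sigma2 i / (eps / 2) ^+ 2 * L = L * (8 * sigma2 i) / eps ^+ 2);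
  last by field; rewrite gt_eqF.
rewrite ler_pdivrMr ?exprn_gt0 // => le_K.
rewrite -[leRHS](lnK (omega_gt0 i)) ler_expR lerNl -/L.
by rewrite ler_pdivlMr ?mulr_gt0.
Qed.

End weights.

Section top_m.
Variables (R : realType) (n : nat) (mu : 'I_n -> R).

Lemma mth_largest_count (m : nat) : (0 < m)%N -> (m <= n)%N ->
  (m <= #|[pred j | (mth_largest m mu <= mu j)%R]|)%N.
Proof.
move=> m_gt0 m_le_n; set x := mth_largest m mu.
have -> : #|[pred j | x <= mu j]| = count (>= x) [seq mu i | i <- enum 'I_n].
  by rewrite enumT count_map cardE /enum_mem size_filter.
rewrite -(permP (permEl (perm_sort (fun y z : R => z <= y) _))).
set l := sort _ _.
have size_l : size l = n by rewrite size_sort size_map size_enum_ord.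
have l_sorted : sorted (fun y z : R => z <= y) l.
  by apply: sort_sorted => y z; exact: le_total.
rewrite -(cat_take_drop m l) count_cat (leq_trans _ (leq_addr _ _)) //.
have take_ge : all (>= x) (take m l).
  apply/(all_nthP 0) => k; rewrite size_takel ?size_l // => k_lt_m.
  rewrite nth_take //.
  apply: (sorted_leq_nth (@le_trans _ R^d) (@lexx _ R^d) 0 l_sorted);
    rewrite ?inE ?size_l; lia.
by move: take_ge; rewrite all_count => /eqP ->; rewrite size_takel ?size_l.
Qed.

Lemma top_m_selection_sound (m : nat) (mhat : 'I_n -> R) (eps : R)
    (S : {set 'I_n}) :
  (0 < m)%N -> (m <= n)%N -> 0 <= eps -> #|S| = m ->
  (forall i j, i \in S -> j \notin S -> mhat j <= mhat i) ->
  (forall j, mth_largest m mu <= mu j -> mu j - mhat j < eps / 2) ->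
  (forall i, mu i < mth_largest m mu - eps -> mhat i - mu i < eps / 2) ->
  {in S, forall i, mth_largest m mu - eps <= mu i}.
Proof.
move=> m_gt0 m_le_n eps_ge0 cardS S_top good_lo bad_hi i iS.
set x := mth_largest m mu; rewrite leNgt; apply/negP => lt_i.
have i_bad : ~~ (x <= mu i) by rewrite -ltNge; lra.
have [j /andP[good_j jS] | all_good_in_S] :=
  pickP [pred j | (x <= mu j) && (j \notin S)].
  have := S_top i j iS jS; have := good_lo j good_j; have := bad_hi i lt_i.
  lra.
have : [pred j | x <= mu j] \subset S :\ i.
  apply/fintype.subsetP => j; rewrite !inE => good_j; apply/andP; split.
    by apply: contraNneq i_bad => <-.
  by have := all_good_in_S j; rewrite /= good_j => /negbFE.
move/subset_leq_card; move: cardS; rewrite (cardsD1 i S) iS.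
have := mth_largest_count m_gt0 m_le_n; rewrite -/x add1n.
by move=> le_m_good card_S /(leq_trans le_m_good); rewrite -card_S ltnn.
Qed.

End top_m.

Import HBNNSimple.
Local Open Scope ereal_scope.

Section preimages.
Context d (T : measurableType d) (R : realType).

Lemma preimage_measurable d' (T' : measurableType d') (U : T -> T')
    (A : set T') :
  measurable_fun setT U -> measurable A -> measurable (U @^-1` A).
Proof. by move=> mU mA; rewrite -[_ @^-1` _]setTI; exact: mU. Qed.

Lemma measurable_superlevel (U : T -> R) (t : R) :
  measurable_fun setT U -> measurable [set w | t <= U w]%R.
Proof.
move=> mU; rewrite (_ : [set w | _] = U @^-1` `[t, +oo[%classic).
  exact/preimage_measurable.
by apply/seteqP; split => w /=; rewrite in_itv /= andbT.
Qed.

End preimages.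

Section comp_mulr.
Context d (T : measurableType d) (R : realType) (P : probability T R).
Variables (U W : T -> R).
Hypotheses (mU : measurable_fun setT U) (mW : measurable_fun setT W).
Hypothesis W_ge0 : forall w, (0 <= W w)%R.

Let measurable_EFin_comp_mulr (h : R -> R) : measurable_fun setT h ->
  measurable_fun setT (fun w => (h (U w) * W w)%:E).
Proof.
move=> mh; apply/measurable_EFinP/measurable_funM => //.
exact: measurableT_comp.
Qed.

Lemma integral_nnsfun_comp_mulr (g : {nnsfun R >-> R}) :
  \int[P]_w (g (U w) * W w)%:E =
    \sum_(y \in range g) y%:E * \int[P]_w (\1_(g @^-1` [set y]) (U w) * W w)%:E.
Proof.
under eq_integral do rewrite fimfunE mulr_fsuml -fsumEFin //.
rewrite ge0_integral_fsum //; last 2 first.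
- move=> y.
  apply: (@measurable_EFin_comp_mulr (fun x => y * \1_(g @^-1` [set y]) x)%R).
  exact/measurable_funM/measurable_indic.
- move=> y w _; rewrite lee_fin mulr_ge0 //.
  by have := nnfun_muleindic_ge0 g y (U w); rewrite -EFinM lee_fin.
apply: eq_fsbigr => y; rewrite inE => -[x _ <-].
under eq_integral do rewrite -mulrA EFinM.
rewrite ge0_integralZl //.
- by apply: measurable_EFin_comp_mulr; exact: measurable_indic.
- by move=> w _; rewrite lee_fin mulr_ge0.
- by rewrite lee_fin.
Qed.

Lemma cvg_integral_nnsfun_approx_comp_mulr (h : R -> R)
    (mh : measurable_fun setT (EFin \o h)) : (forall x, (0 <= h x)%R) ->
  (fun k => \int[P]_w (nnsfun_approx measurableT mh k (U w) * W w)%:E)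
    @ \oo --> \int[P]_w (h (U w) * W w)%:E.
Proof.
move=> h_ge0; set g := nnsfun_approx _ _.
have -> : \int[P]_w (h (U w) * W w)%:E =
    \int[P]_w limn (fun k => (g k (U w) * W w)%:E).
  apply: eq_integral => w _; apply/esym/cvg_lim => //.
  under eq_fun do rewrite EFinM.
  rewrite EFinM; apply: cvgeZr => //.
  by apply: cvg_nnsfun_approx => // x _; rewrite lee_fin.
apply: cvg_monotone_convergence => //.
- by move=> k; apply: measurable_EFin_comp_mulr; exact/measurable_funP.
- by move=> k w _; rewrite lee_fin mulr_ge0.
- move=> w _ a b ab; rewrite lee_fin ler_wpM2r //.
  exact/lefP/nd_nnsfun_approx.
Qed.

End comp_mulr.

Section factorization.
Context d (T : measurableType d) (R : realType) (P : probability T R).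

Lemma integral_comp_mulr_factor (U W : T -> R) (c : R) :
  measurable_fun setT U -> measurable_fun setT W -> (forall w, (0 <= W w)%R) ->
  (forall A, measurable A ->
     \int[P]_w (\1_A (U w) * W w)%:E = P (U @^-1` A) * c%:E) ->
  forall h : R -> R, measurable_fun setT h -> (forall x, (0 <= h x)%R) ->
  \int[P]_w (h (U w) * W w)%:E = \int[P]_w (h (U w))%:E * c%:E.
Proof.
move=> mU mW W_ge0 Wfactor h mh h_ge0.
have mEh : measurable_fun setT (EFin \o h) by exact/measurable_EFinP.
have finP A : measurable A -> P (U @^-1` A) = (fine (P (U @^-1` A)))%:E.
  by move=> mA; rewrite fineK // fin_num_measure //; exact: preimage_measurable.
have indic_factor A : measurable A ->
    \int[P]_w (\1_A (U w) * cst 1 w)%:E = P (U @^-1` A) * 1%:E.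
  move=> mA; under eq_integral do rewrite mulr1.
  rewrite mule1 -[U @^-1` A]setIT -integral_indic //.
  exact: preimage_measurable.
have simple_factor (g : {nnsfun R >-> R}) :
    \int[P]_w (g (U w) * W w)%:E = \int[P]_w (g (U w) * cst 1 w)%:E * c%:E.
  rewrite !integral_nnsfun_comp_mulr //.
  under eq_fsbigr => y _ do rewrite Wfactor // finP // -!EFinM.
  under [in RHS]eq_fsbigr => y _ do rewrite indic_factor // finP // -!EFinM.
  rewrite !fsumEFin // -EFinM mulr_fsuml; congr (_%:E).
  by apply: eq_fsbigr => y _; rewrite mulr1 mulrA.
have := cvg_integral_nnsfun_approx_comp_mulr (P := P) mU mW W_ge0 mEh h_ge0.
under eq_fun do rewrite simple_factor.
move/cvg_lim => <- //.
have := cvg_integral_nnsfun_approx_comp_mulr (P := P) mU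
  (measurable_cst (1%R : R)) (fun=> ler01) mEh h_ge0.
move/(cvgeZr (fin_numE c%:E))/cvg_lim => -> //.
by under eq_integral do rewrite /= mulr1.
Qed.

End factorization.

Section independence.
Context d (T : measurableType d) (R : realType) (P : probability T R).
Context (I : eqType) (Y : I -> T -> R).
Hypotheses (mY : forall i, measurable_fun setT (Y i))
  (Y_indep : mutually_independent P Y).
Variables (f : I -> R -> R).
Hypotheses (mf : forall i, measurable_fun setT (f i))
  (f_ge0 : forall i x, (0 <= f i x)%R).

Definition joint_event (L : seq I) (B : I -> set R) :=
  \bigcap_(l in [set` L]) (Y l @^-1` B l).

Lemma measurable_joint_event L B :
  (forall l, measurable (B l)) -> measurable (joint_event L B).
Proof.
move=> mB; apply: fin_bigcap_measurable; first exact: finite_seq.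
by move=> l _; exact: preimage_measurable.
Qed.

Lemma joint_event_nil B : joint_event [::] B = setT.
Proof. by rewrite /joint_event set_nil bigcap_set0. Qed.

Lemma joint_event_cons j L B :
  joint_event (j :: L) B = Y j @^-1` B j `&` joint_event L B.
Proof.
rewrite /joint_event (_ : [set` j :: L] = j |` [set` L]) ?bigcap_setU1 //.
apply/seteqP; split => l /=; rewrite in_cons.
  by move=> /orP[/eqP|]; [left|right].
by move=> [->|->]; rewrite ?eqxx ?orbT.
Qed.

Lemma joint_event_cons_update j L (A : set R) B : j \notin L ->
  joint_event (j :: L) (fun l => if l == j then A else B l) =
    Y j @^-1` A `&` joint_event L B.
Proof.
move=> jL; rewrite joint_event_cons eqxx; congr (_ `&` _).
by apply: eq_bigcapr => l lL; rewrite ifN //; apply: contraNneq jL => <-.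
Qed.

Lemma fine_measure_preimage_joint_event j L (A : set R) B :
  j \notin L -> uniq L -> measurable A -> (forall l, measurable (B l)) ->
  fine (P (Y j @^-1` A `&` joint_event L B)) =
    (fine (P (Y j @^-1` A)) * fine (P (joint_event L B)))%R.
Proof.
move=> jL uL mA mB; rewrite -joint_event_cons_update // /joint_event.
rewrite !Y_indep //=; last 2 first.
- by rewrite jL.
- by move=> l _; case: ifP.
rewrite big_cons eqxx; congr (_ * _)%R; apply: eq_big_seq => l lL.
by rewrite ifN //; apply: contraNneq jL => <-.
Qed.

(* The indicator of the [L]-events is carried along so that the induction
   hypothesis, applied to [j :: L], provides the hypothesis of
   [integral_comp_mulr_factor] for the head factor [f j (Y j w)]. *)
Lemma integral_prod_mul_indic_joint_event (J L : seq I) (B : I -> set R) :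
  uniq (J ++ L) -> (forall l, measurable (B l)) ->
  {in J, forall j, \int[P]_w (f j (Y j w))%:E \is a fin_num} ->
  \int[P]_w ((\prod_(j <- J) f j (Y j w)) * \1_(joint_event L B) w)%:E =
    ((\prod_(j <- J) fine (\int[P]_w (f j (Y j w))%:E)) *
      fine (P (joint_event L B)))%:E.
Proof.
elim: J L B => [|j J IH] L B uJL mB f_fin.
  under eq_integral do rewrite big_nil mul1r.
  have mC := measurable_joint_event L mB.
  by rewrite big_nil mul1r integral_indic // setIT fineK // fin_num_measure.
have [jL uL] : j \notin L /\ uniq L.
  move: uJL; rewrite /= mem_cat negb_or cat_uniq.
  by move=> /andP[/andP[_ ->] /and3P[_ _ ->]].
have f_fin_J : {in J, forall i, \int[P]_w (f i (Y i w))%:E \is a fin_num}.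
  by move=> i iJ; apply: f_fin; rewrite inE iJ orbT.
set W := fun w => (\prod_(i <- J) f i (Y i w) * \1_(joint_event L B) w)%R.
set c := (\prod_(i <- J) fine (\int[P]_w (f i (Y i w))%:E) *
  fine (P (joint_event L B)))%R.
have mW : measurable_fun setT W.
  apply: measurable_funM; last exact/measurable_indic/measurable_joint_event.
  by apply: measurable_prod => i _; exact: measurableT_comp.
have W_ge0 w : (0 <= W w)%R by rewrite mulr_ge0 ?prodr_ge0 // /indic ler0n.
have Wfactor A : measurable A ->
    \int[P]_w (\1_A (Y j w) * W w)%:E = P (Y j @^-1` A) * c%:E.
  move=> mA; pose B' l := if l == j then A else B l.
  have mB' l : measurable (B' l) by rewrite /B'; case: ifP.
  transitivity (\int[P]_w ((\prod_(i <- J) f i (Y i w)) *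
      \1_(joint_event (j :: L) B') w)%:E).
    apply: eq_integral => w _.
    by rewrite joint_event_cons_update // indicI /W mulrCA.
  rewrite IH //; last by rewrite uniq_catC /= mem_cat orbC -mem_cat uniq_catC.
  rewrite joint_event_cons_update // fine_measure_preimage_joint_event //.
  rewrite -(fineK (fin_num_measure P _ (preimage_measurable (mY j) mA))).
  by rewrite -EFinM /c mulrCA.
rewrite (eq_integral (fun w => (f j (Y j w) * W w)%:E)); last first.
  by move=> w _; rewrite big_cons /W mulrA.
rewrite (integral_comp_mulr_factor (mY j) mW W_ge0 Wfactor (mf j) (f_ge0 j)).
by rewrite -(fineK (f_fin j (mem_head _ _))) -EFinM big_cons /c mulrA.
Qed.

Lemma integral_prod_indep (J : seq I) : uniq J ->
  {in J, forall j, \int[P]_w (f j (Y j w))%:E \is a fin_num} ->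
  \int[P]_w (\prod_(j <- J) f j (Y j w))%:E =
    (\prod_(j <- J) fine (\int[P]_w (f j (Y j w))%:E))%:E.
Proof.
move=> uJ f_fin.
have := @integral_prod_mul_indic_joint_event J [::] (fun=> setT).
rewrite cats0 joint_event_nil probability_setT mulr1 => <- //.
by apply: eq_integral => w _; rewrite indicT mulr1.
Qed.

End independence.

Section tail_bounds.
Context d (T : measurableType d) (R : realType) (P : probability T R).

Lemma ge0_integral_law (U : T -> R) (D : probability R R) (g : R -> R) :
  measurable_fun setT U -> (forall B, measurable B -> P (U @^-1` B) = D B) ->
  measurable_fun setT g -> (forall x, (0 <= g x)%R) ->
  \int[P]_w (g (U w))%:E = \int[D]_x (g x)%:E.
Proof.
move=> mU lawU mg g_ge0.
rewrite [RHS](eq_measure_integral (pushforward P U)); last first.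
  by move=> A mA _; exact/esym/lawU.
rewrite ge0_integral_pushforward //; first exact/measurable_EFinP.
by move=> x _; rewrite lee_fin.
Qed.

Lemma measurable_expR_affine (lam mu : R) :
  measurable_fun setT (fun x : R => expR (lam * (x - mu)))%R.
Proof.
apply: measurableT_comp => //; apply: measurable_funM => //.
exact: measurable_funB.
Qed.

Lemma subgaussian_sum_tail (I : eqType) (Y : I -> T -> R) (J : seq I)
    (mu sigma2 lam t : R) :
  (forall i, measurable_fun setT (Y i)) -> mutually_independent P Y -> uniq J ->
  {in J, forall j, \int[P]_w (expR (lam * (Y j w - mu)))%:E <=
                   (expR (sigma2 * lam ^+ 2 / 2))%:E} ->
  P [set w | t <= lam * \sum_(j <- J) (Y j w - mu)]%R <=
    (expR ((size J)%:R * (sigma2 * lam ^+ 2 / 2) - t))%:E.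
Proof.
move=> mY Y_indep uJ mgf_le.
pose Z := (fun w => lam * \sum_(j <- J) (Y j w - mu))%R.
have mZ : measurable_fun setT Z.
  apply: measurable_funM => //; apply: measurable_sum => j.
  exact: measurable_funB.
have := chernoff (P := P) (mfun_Sub (mem_set mZ : Z \in mfun)) t ltr01.
rewrite /mmt_gen_fun unlock /= => /le_trans; apply.
rewrite mul1r expRD EFinM; apply: lee_wpmul2r.
  by rewrite lee_fin expR_ge0.
under eq_integral do rewrite mulr1 /Z mulr_sumr expR_sum.
have mgf_fin :
    {in J, forall j, \int[P]_w (expR (lam * (Y j w - mu)))%:E \is a fin_num}.
  move=> j jJ; rewrite ge0_fin_numE ?(le_lt_trans (mgf_le j jJ)) ?ltry //.
  by apply: integral_ge0 => w _; rewrite lee_fin expR_ge0.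
rewrite (integral_prod_indep mY Y_indep (fun=> measurable_expR_affine lam mu)
  (fun _ _ => expR_ge0 _) uJ mgf_fin) lee_fin expRM_natl.
have -> : forall x : R, (x ^+ size J = \prod_(j <- J) x)%R.
  by move=> x; elim: (J) => [|j J' IH]; rewrite ?big_nil ?big_cons ?exprS ?IH.
rewrite !big_seq; apply: ler_prod => j jJ.
rewrite -lee_fin fineK ?mgf_fin ?mgf_le // andbT fine_ge0 //.
by apply: integral_ge0 => w _; rewrite lee_fin expR_ge0.
Qed.

Lemma subgaussian_sum_deviation (I : eqType) (X : I -> nat -> T -> R) (i : I)
    (K : nat) (mu sigma2 eps s : R) :
  (forall i k, measurable_fun setT (X i k)) ->
  mutually_independent P (fun ik : I * nat => X ik.1 ik.2) ->
  (0 < eps)%R -> (0 < sigma2)%R -> (s ^+ 2 = 1)%R ->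
  (forall k lam, \int[P]_w (expR (lam * (X i k w - mu)))%:E <=
                 (expR (sigma2 * lam ^+ 2 / 2))%:E) ->
  P [set w | K%:R * (eps / 2) <= s * \sum_(k < K) (X i k w - mu)]%R <=
    (expR (- (K%:R * eps ^+ 2 / (8 * sigma2))))%:E.
Proof.
move=> mX X_indep eps_gt0 sigma2_gt0 s2 mgf_le.
(* lambda = s * c minimizes the Chernoff exponent for this threshold. *)
pose c := (eps / (2 * sigma2))%R.
have c_gt0 : (0 < c)%R by rewrite divr_gt0 ?mulr_gt0.
pose J := [seq (i, k) | k <- iota 0 K].
have sizeJ : size J = K by rewrite size_map size_iota.
have sumJ w :
    (\sum_(j <- J) (X j.1 j.2 w - mu) = \sum_(k < K) (X i k w - mu))%R.
  rewrite big_map -(big_mkord xpredT (fun k => X i k w - mu)%R).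
  by rewrite /index_iota subn0.
have uJ : uniq J by rewrite map_inj_uniq ?iota_uniq // => k k' [].
have mgfJ : {in J, forall j, \int[P]_w (expR (s * c * (X j.1 j.2 w - mu)))%:E <=
                             (expR (sigma2 * (s * c) ^+ 2 / 2))%:E}.
  by move=> j /mapP[k _ ->]; exact: mgf_le.
have -> : [set w | K%:R * (eps / 2) <= s * \sum_(k < K) (X i k w - mu)]%R =
    [set w | c * (K%:R * (eps / 2)) <=
             s * c * \sum_(j <- J) (X j.1 j.2 w - mu)]%R.
  apply: eq_set => w.
  by rewrite sumJ (mulrC s c) -[(c * s * _)%R]mulrA ler_pM2l.
have := subgaussian_sum_tail (c * (K%:R * (eps / 2))) (fun ik => mX ik.1 ik.2)
  X_indep uJ mgfJ.
move/le_trans; apply.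
rewrite lee_fin ler_expR sizeJ exprMn s2 mul1r /c.
by rewrite le_eqVlt; apply/orP; left; apply/eqP; field; rewrite gt_eqF.
Qed.

Lemma probability_setC_bigsetU_ge (I : Type) (r : seq I) (F : I -> set T)
    (p : I -> R) :
  (forall i, measurable (F i)) -> (forall i, P (F i) <= (p i)%:E) ->
  (1 - \sum_(i <- r) p i)%:E <= P (~` \big[setU/set0]_(i <- r) F i).
Proof.
move=> mF PF_le.
have mU : measurable (\big[setU/set0]_(i <- r) F i).
  exact: bigsetU_measurable.
have PU_le : P (\big[setU/set0]_(i <- r) F i) <= (\sum_(i <- r) p i)%:E.
  elim: (r) => [|i r' IH]; first by rewrite !big_nil measure0.
  rewrite !big_cons EFinD; apply: le_trans (measureU2 _ _ _) _ => //.
    exact: bigsetU_measurable.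
  exact: leeD (PF_le i) IH.
rewrite probability_setC // -(fineK (fin_num_measure P _ mU)) -EFinB lee_fin.
by rewrite lerD2l lerN2 -lee_fin fineK // fin_num_measure.
Qed.

End tail_bounds.

Local Close Scope ereal_scope.

Section naive_elimination.
Variables (R : realType) (n : nat) (eps delta : R) (sigma2 : 'I_n -> R).
Hypotheses (eps_gt0 : 0 < eps) (delta_gt0 : 0 < delta) (delta_lt1 : delta < 1).
Hypothesis sigma2_gt0 : forall i, 0 < sigma2 i.
Context d (T : measurableType d) (mu : 'I_n -> R) (X : 'I_n -> nat -> T -> R).
Hypothesis mX : forall i k, measurable_fun setT (X i k).

Definition deviation_event i (s : R) : set T :=
  [set w | (pulls eps delta sigma2 i)%:R * (eps / 2) <=
           s * \sum_(k < pulls eps delta sigma2 i) (X i k w - mu i)].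

Lemma measurable_deviation_event i s : measurable (deviation_event i s).
Proof.
apply: measurable_superlevel; apply: measurable_funM => //.
by apply: measurable_sum => k; exact: measurable_funB.
Qed.

Lemma sample_mean_deviation_lt i s w : ~ deviation_event i s w ->
  s * (sample_mean eps delta sigma2 X i w - mu i) < eps / 2.
Proof.
move=> not_dev; apply: (mean_deviation_lt (x := fun k => X i k w)).
  exact: pulls_gt0.
by rewrite ltNge; apply/negP.
Qed.

Lemma deviation_event_le_omega (P : probability T R) (D : probability R R) i s :
  arm_ok D (mu i) (sigma2 i) ->
  (forall k B, measurable B -> P (X i k @^-1` B) = D B) ->
  mutually_independent P (fun ik : 'I_n * nat => X ik.1 ik.2) -> s ^+ 2 = 1 ->
  (P (deviation_event i s) <= (omega delta sigma2 i)%:E)%E.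
Proof.
move=> arm_D law_X X_indep s2.
have mgf_le k lam : (\int[P]_w (expR (lam * (X i k w - mu i)))%:E <=
    (expR (sigma2 i * lam ^+ 2 / 2))%:E)%E.
  rewrite (ge0_integral_law (mX i k) (law_X k) (measurable_expR_affine _ _)).
    exact: arm_D.2.
  by move=> y; exact: expR_ge0.
have := subgaussian_sum_deviation (pulls eps delta sigma2 i) mX X_indep eps_gt0
  (sigma2_gt0 i) s2 mgf_le.
move/le_trans; apply.
by rewrite lee_fin expR_pulls_le_omega.
Qed.

End naive_elimination.

Theorem lemma2 (R : realType) (n m : nat) (eps delta : R) (sigma2 : 'I_n -> R)
  (hm : (0 < m)%N) (hmn : (m <= n)%N) (heps : 0 < eps)
  (hd0 : 0 < delta) (hd1 : delta < 1) (hs : forall i, 0 < sigma2 i) :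
  (* sample complexity *)
  \sum_(i < n) num_pulls eps delta sigma2 i =
    8 * (\sum_(i < n) sigma2 i / eps ^+ 2) * (ln (1 / delta) + Ent sigma2)
  /\
  (* correctness: (eps, delta) top-m identification on every instance *)
  (forall (d : measure_display) (T : measurableType d) (P : probability T R)
     (mu : 'I_n -> R) (D : 'I_n -> probability R R)
     (X : 'I_n -> nat -> T -> R),
     (forall i, arm_ok (D i) (mu i) (sigma2 i)) ->
     (forall i k, measurable_fun setT (X i k)) ->
     (forall i k (B : set R), measurable B -> P (X i k @^-1` B) = D i B) ->
     mutually_independent P (fun ik : 'I_n * nat => X ik.1 ik.2) ->
     exists A : set T, measurable A /\ ((1 - delta)%:E <= P A)%E /\
       forall w, A w ->
         forall S : {set 'I_n}, #|S| = m ->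
           (forall i j, i \in S -> j \notin S ->
              sample_mean eps delta sigma2 X j w <= sample_mean eps delta sigma2 X i w) ->
           forall i, i \in S -> mth_largest m mu - eps <= mu i).
Proof.
split; first exact: sum_num_pulls.
move=> d T P mu D X arm_D mX law_X X_indep.
set x := mth_largest m mu.
pose s i : R := if x <= mu i then -1 else 1.
pose Bad i := deviation_event eps delta sigma2 mu X i (s i).
have s2 i : s i ^+ 2 = 1 by rewrite /s; case: ifP; rewrite ?sqrrN expr1n.
exists (~` \big[setU/set0]_(i < n) Bad i); split.
  apply/measurableC/bigsetU_measurable => i _.
  exact: measurable_deviation_event.
split.
  rewrite -(sum_omega delta hs (leq_trans hm hmn)).
  apply: probability_setC_bigsetU_ge => i.
    exact: measurable_deviation_event.
  apply: (deviation_event_le_omega heps hd0 hs mX (arm_D i) _ X_indep (s2 i)).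
  by move=> k B; exact: law_X.
move=> w notBad S cardS S_top.
have dev_lt i : s i * (sample_mean eps delta sigma2 X i w - mu i) < eps / 2.
  apply: (sample_mean_deviation_lt heps hd0 hd1 hs) => Bi.
  by apply: notBad; rewrite (bigD1 i) //=; left.
apply: (top_m_selection_sound hm hmn (ltW heps) cardS S_top).
  by move=> j good_j; have := dev_lt j; rewrite /s good_j mulN1r opprB.
move=> i bad_i; have {bad_i} bad_i : mu i < x.
  by apply: lt_trans bad_i _; rewrite ltrBlDr ltrDl.
by have := dev_lt i; rewrite /s leNgt bad_i mul1r.
Qed.
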